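(* Let $P(Y)\in R[Y]$ be $m$-triangular and let $Q(Y)\in R[Y]$ be linear. Then: (0) for every $q\in\mathbb{Q}_+$, $qP(Y)$ is $m$-triangular and $qQ(Y)$ is linear; (1) if $\deg P(Y)\ge a+1$, then $P'(Y)$ is $m$-triangular; (2) if $Q(Y)$ is nonconstant, then $Q'(Y)$ is linear; (3) $P(Y)Q(Y)$ is $(m+1)$-triangular.
   Context: Fix a positive integer $a$ and variables $u_0,\ldots,u_a$. Let $R=\mathbb{C}[u_0,\ldots,u_{a-1}][u_a,u_a^{-1}]$. $\mathbb{Q}_+$ denotes the positive rational numbers. For an integer $m\ge1$, a polynomial $P(Y)=\sum_{l=0}^dp_lY^l\in R[Y]$ of degree $d\ge a$ is called $m$-triangular if for every $l$ with $d-a\le l\le d$ one has $p_l=q_lu_a^{m-1}u_{a-d+l}+P_l(u_{a-d+l+1},\ldots,u_a)$ for some $q_l\in\mathbb{Q}_+$ and some polynomial $P_l\in\mathbb{C}[u_{a-d+l+1},\ldots,u_a]$ (for $l=d$ this means $p_d=q_du_a^m$). A polynomial $P(Y)=\sum_{l=0}^dp_lY^l\in R[Y]$ is called linear (or $U$-linear) if $0\le d=\deg P(Y)\le a$ and $p_l\in\mathbb{Q}_+u_{a-d+l}$ for all $l\in\{0,\ldots,d\}$. Derivatives are with respect to $Y$. *)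

From HB Require Import structures.
From mathcomp Require Import all_boot all_order all_algebra.
From mathcomp Require Import mpoly.
From mathcomp Require Import complex.
From mathcomp Require Import Rstruct.
From mathcomp Require Import fraction.
Set Implicit Arguments. Unset Strict Implicit. Unset Printing Implicit Defensive.
Import Order.TTheory GRing.Theory Num.Theory.
Local Open Scope ring_scope.

Definition CC : Type := complex Rdefinitions.R.

(* Polynomial ring C[u_0,...,u_a] in a+1 variables; u_j is 'X_j. *)
Definition Pol (a : nat) := {mpoly CC[a.+1]}.

(* Its field of fractions; R = C[u_0..u_{a-1}][u_a,u_a^{-1}] is realised as
   the subring of elements f such that f * u_a^k is a polynomial for some k. *)
Definition Frac (a : nat) := {fraction (Pol a)}.

Definition emb (a : nat) (p : Pol a) : Frac a := FracField.tofrac p.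

Definition uvar (a j : nat) : Pol a := 'X_(inord j).

Definition ufrac (a j : nat) : Frac a := emb (uvar a j).

Definition inR (a : nat) (f : Frac a) : Prop :=
  exists (k : nat) (p : Pol a), f * (ufrac a a) ^+ k = emb p.

Definition inRY (a : nat) (P : {poly Frac a}) : Prop :=
  forall l, inR (P`_l).

Definition vars_above (a j : nat) (p : Pol a) : Prop :=
  forall (mon : 'X_{1..a.+1}), mon \in msupp p ->
    forall i : 'I_a.+1, (i <= j)%N -> mon i = 0%N.

(* m-triangular polynomial, with d = deg P = (size P).-1 and the coefficient
   index a-d+l written as l - (d - a) (a natural number since d >= a and
   l >= d - a). *)
Definition triangular (a m : nat) (P : {poly Frac a}) : Prop :=
  inRY P /\
  exists d : nat, size P = d.+1 /\ (a <= d)%N /\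
   forall l : nat, ((d - a)%N <= l)%N -> (l <= d)%N ->
     exists q : rat, 0 < q /\
       (l = d -> P`_l = ratr q * ufrac a a ^+ m) /\
       ((l < d)%N -> exists Pl : Pol a, vars_above (l - (d - a))%N Pl /\
          P`_l = ratr q * ufrac a a ^+ m.-1 * ufrac a (l - (d - a))%N + emb Pl).

Definition ulinear (a : nat) (Q : {poly Frac a}) : Prop :=
  exists d : nat, size Q = d.+1 /\ (d <= a)%N /\
   forall l : nat, (l <= d)%N ->
     exists q : rat, 0 < q /\ Q`_l = ratr q * ufrac a (l + (a - d))%N.

Arguments triangular a m P : clear implicits.

(* Scaling and differentiation multiply coefficients by positive rationals, the
   index shift of the derivative being absorbed by the shift d - a, and in
   characteristic 0 differentiation lowers the degree by exactly one. In P * Q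
   with deg Q = e, take d + e - a <= L < d + e and k = L - (d + e - a): among the
   products P_i Q_(L-i), the one with L - i = e is q q' u_a^m u_k modulo higher
   variables, the one with i = d is a nonnegative multiple of u_a^m u_k, and all
   others only involve variables u_j with j > k. *)

From HB Require Import structures.
From mathcomp Require Import all_boot all_order all_algebra.
From mathcomp Require Import mpoly complex fraction Rstruct ring zify.
Import Order.TTheory GRing.Theory Num.Theory.
Local Open Scope ring_scope.

Lemma size_deriv_pchar0 (R : idomainType) (p : {poly R}) :
  has_pchar0 R -> size p^`() = (size p).-1.
Proof.
move=> char0; have [sp_le1 | sp_gt1] := leqP (size p) 1.
  by rewrite [p]size1_polyC // derivC size_poly0 size_polyC; case: eqP.
have n_gt0 : (0 < (size p).-1)%N by rewrite -ltnS prednK // ltnW.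
rewrite /deriv size_poly_eq // prednK // -mulr_natr mulf_neq0 //.
  by rewrite -lead_coefE lead_coef_eq0 -size_poly_gt0 ltnW.
by rewrite (pcharf0P _).1 // -lt0n.
Qed.

Section Coefficients.
Variable a : nat.
Local Notation u := (ufrac a).
Implicit Types (p : Pol a) (x y : Frac a) (q r : rat) (P Q : {poly Frac a}).

Definition embC : {rmorphism CC -> Frac a} := @tofrac (Pol a) \o @mpolyC a.+1 CC.

Lemma Frac_pchar0 : has_pchar0 (Frac a).
Proof. by move=> n; rewrite (fmorph_pchar embC) pchar_num. Qed.

(* Frac a is not a numFieldType, so the morphism properties of ratr on it are
   obtained from its factorisation through CC. *)
Definition ratF : {rmorphism rat -> Frac a} := embC \o ratr.

Lemma ratF_ratr : ratF =1 ratr. Proof. exact: fmorph_eq_rat. Qed.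

Lemma ratr_embC q : ratr q = embC (ratr q).
Proof. by rewrite -ratF_ratr. Qed.

Lemma ratrD q r : ratr (q + r) = ratr q + ratr r :> Frac a.
Proof. by rewrite -!ratF_ratr rmorphD. Qed.

Lemma ratrM q r : ratr (q * r) = ratr q * ratr r :> Frac a.
Proof. by rewrite -!ratF_ratr rmorphM. Qed.

Lemma ratr_gt0_neq0 q : 0 < q -> ratr q != 0 :> Frac a.
Proof. by move=> q_gt0; rewrite -ratF_ratr fmorph_eq0 gt_eqF. Qed.

Lemma coef_deriv_ratr (P : {poly Frac a}) l : P^`()`_l = ratr l.+1%:R * P`_l.+1.
Proof. by rewrite coef_deriv ratr_nat mulr_natl. Qed.

Definition above j x := exists2 p, vars_above j p & x = emb p.

Lemma above0 j : above j 0.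
Proof. by exists 0; rewrite ?rmorph0 // => mon; rewrite msupp0. Qed.

Lemma aboveD j x y : above j x -> above j y -> above j (x + y).
Proof.
move=> [p p_above ->] [p' p'_above ->]; exists (p + p'); last by rewrite /emb rmorphD.
by move=> mon /msuppD_le; rewrite mem_cat => /orP[]; [apply: p_above | apply: p'_above].
Qed.

Lemma aboveM j x y : above j x -> above j y -> above j (x * y).
Proof.
move=> [p p_above ->] [p' p'_above ->]; exists (p * p'); last by rewrite /emb rmorphM.
move=> mon /msuppM_le /allpairsP[[m1 m2] [/= m1_supp m2_supp ->]] i le_ij.
by rewrite mnmDE (p_above _ m1_supp _ le_ij) (p'_above _ m2_supp _ le_ij).
Qed.

Lemma above_embC j c : above j (embC c).
Proof.
exists c%:MP => // mon; rewrite msuppC; case: (c == 0) => //.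
by rewrite inE => /eqP -> i _; rewrite mnm0E.
Qed.

Lemma above_ratr j q : above j (ratr q).
Proof. by rewrite ratr_embC; apply: above_embC. Qed.

Lemma aboveX j x n : above j x -> above j (x ^+ n).
Proof.
move=> x_above; elim: n => [|n IHn]; last by rewrite exprS; apply: aboveM.
by rewrite expr0 -(rmorph1 embC); apply: above_embC.
Qed.

Lemma above_ufrac j i : (j < i <= a)%N -> above j (u i).
Proof.
move=> /andP[lt_ji le_ia]; exists (uvar a i) => // mon.
rewrite /uvar msuppX inE => /eqP -> k le_kj; rewrite mnm1E.
by case: eqP => // k_i; move: le_kj; rewrite -k_i inordK //; lia.
Qed.

Lemma above_le j j' x : (j' <= j)%N -> above j x -> above j' x.
Proof. by move=> le_j'j [p p_above ->]; exists p => // mon /p_above + i le_ij'; apply; lia. Qed.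

Lemma inR_emb p : inR (emb p).
Proof. by exists 0%N, p; rewrite mulr1. Qed.

Lemma inR0 : inR (0 : Frac a).
Proof. by rewrite -(rmorph0 (@tofrac (Pol a))); apply: inR_emb. Qed.

Lemma inR_ratr q : inR (ratr q : Frac a).
Proof. by rewrite ratr_embC; apply: inR_emb. Qed.

Lemma inRD x y : inR x -> inR y -> inR (x + y).
Proof.
move=> [k [p xE]] [k' [p' yE]].
exists (k + k')%N, (p * uvar a a ^+ k' + p' * uvar a a ^+ k).
have -> : emb (p * uvar a a ^+ k' + p' * uvar a a ^+ k) = emb p * u a ^+ k' + emb p' * u a ^+ k.
  by rewrite /ufrac /emb rmorphD !rmorphM !rmorphXn.
by rewrite -xE -yE exprD; ring.
Qed.

Lemma inRM x y : inR x -> inR y -> inR (x * y).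
Proof.
move=> [k [p xE]] [k' [p' yE]]; exists (k + k')%N, (p * p').
have -> : emb (p * p') = emb p * emb p' by rewrite /emb rmorphM.
by rewrite -xE -yE exprD; ring.
Qed.

Lemma inRY_mul (P Q : {poly Frac a}) : inRY P -> inRY Q -> inRY (P * Q).
Proof.
move=> P_R Q_R l; rewrite coefM; apply: (big_ind (@inR a)); first exact: inR0.
  exact: inRD.
by move=> i _; apply: inRM.
Qed.

Definition tri_term n k r x := exists2 y, above k y & x = ratr r * u a ^+ n * u k + y.

Lemma tri_term_above n k x : above k x -> tri_term n k 0 x.
Proof. by exists x => //; rewrite -ratF_ratr rmorph0 !mul0r add0r. Qed.

Lemma tri_termD n k r s x y :
  tri_term n k r x -> tri_term n k s y -> tri_term n k (r + s) (x + y).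
Proof.
move=> [x' x'_above ->] [y' y'_above ->]; exists (x' + y'); first exact: aboveD.
by rewrite ratrD; ring.
Qed.

Lemma tri_termZ n k q r x : tri_term n k r x -> tri_term n k (q * r) (ratr q * x).
Proof.
move=> [y y_above ->]; exists (ratr q * y); last by rewrite ratrM; ring.
by apply: aboveM => //; apply: above_ratr.
Qed.

Lemma above_tri_term n k k' r x : (k < k' <= a)%N -> tri_term n k' r x -> above k x.
Proof.
move=> /andP[lt_kk' le_k'a] [y y_above ->].
apply: aboveD; last exact: above_le (ltnW lt_kk') y_above.
apply: aboveM; last by apply: above_ufrac; rewrite lt_kk'.
apply: aboveM; first exact: above_ratr.
by apply: aboveX; apply: above_ufrac; rewrite leqnn andbT (leq_trans lt_kk').
Qed.

Lemma triangularP m P :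
  triangular a m P <->
  inRY P /\ exists d, [/\ size P = d.+1, (a <= d)%N,
    exists2 q, 0 < q & P`_d = ratr q * u a ^+ m &
    forall l, (d - a <= l < d)%N ->
      exists2 q, 0 < q & tri_term m.-1 (l - (d - a)) q P`_l].
Proof.
split=> [[P_R [d [sizeP [le_ad coefP]]]] | [P_R [d [sizeP le_ad [q q_gt0 leadP] coefP]]]].
  split=> //; exists d; split=> //.
    by have [q [q_gt0 [leadP _]]] := coefP d (leq_subr _ _) (leqnn d); exists q; rewrite ?leadP.
  move=> l /andP[le_l lt_ld].
  have [q [q_gt0 [_ /(_ lt_ld)[p [p_above ->]]]]] := coefP l le_l (ltnW lt_ld).
  by exists q => //; exists (emb p) => //; exists p.
split=> //; exists d; do 2!split=> //; move=> l le_l le_ld.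
case: ltngtP le_ld => // [lt_ld _ | -> _]; last by exists q; do 2!split=> //; rewrite ltnn.
have [q' q'_gt0 [y [p p_above ->] Pl]] := coefP l (introT andP (conj le_l lt_ld)).
by exists q'; do 2!split=> //; [move=> eq_ld; rewrite eq_ld ltnn in lt_ld | exists p].
Qed.

Lemma ulinear_inRY Q : ulinear Q -> inRY Q.
Proof.
move=> [e [sizeQ [_ coefQ]]] l; have [le_le | lt_el] := leqP l e.
  by have [q [_ ->]] := coefQ l le_le; apply: inRM; [apply: inR_ratr | apply: inR_emb].
by rewrite nth_default ?sizeQ //; apply: inR0.
Qed.

Lemma triangularZ m P q : 0 < q -> triangular a m P -> triangular a m (ratr q *: P).
Proof.
move=> q_gt0 /triangularP[P_R [d [sizeP le_ad [r r_gt0 leadP] coefP]]].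
apply/triangularP; split=> [l|]; first by rewrite coefZ; apply: inRM; [apply: inR_ratr|].
exists d; split=> //; first by rewrite size_scale ?ratr_gt0_neq0.
  by exists (q * r); [apply: mulr_gt0 | rewrite coefZ leadP ratrM mulrA].
move=> l /coefP[r' r'_gt0 Pl]; exists (q * r'); first exact: mulr_gt0.
by rewrite coefZ; apply: tri_termZ.
Qed.

Lemma ulinearZ Q q : 0 < q -> ulinear Q -> ulinear (ratr q *: Q).
Proof.
move=> q_gt0 [e [sizeQ [le_ea coefQ]]]; exists e.
split; first by rewrite size_scale ?ratr_gt0_neq0.
split=> // l /coefQ[r [r_gt0 Ql]]; exists (q * r); split; first exact: mulr_gt0.
by rewrite coefZ Ql ratrM mulrA.
Qed.

Lemma triangular_deriv m P :
  triangular a m P -> (a < (size P).-1)%N -> triangular a m P^`().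
Proof.
move=> /triangularP[P_R [d [sizeP le_ad [q q_gt0 leadP] coefP]]].
rewrite sizeP /= => lt_ad; have d_gt0 : (0 < d)%N by apply: leq_trans lt_ad.
apply/triangularP; split=> [l|]; first by rewrite coef_deriv_ratr; apply: inRM; [apply: inR_ratr|].
exists d.-1; split.
- by rewrite (size_deriv_pchar0 _ _ Frac_pchar0) sizeP prednK.
- by rewrite -ltnS prednK.
- exists (d%:R * q); first by rewrite mulr_gt0 ?ltr0n.
  by rewrite coef_deriv_ratr prednK // leadP ratrM mulrA.
move=> l le_l; rewrite coef_deriv_ratr.
have -> : (l - (d.-1 - a) = l.+1 - (d - a))%N by lia.
have [r r_gt0 Pl] := coefP l.+1 ltac:(lia).
by exists (l.+1%:R * r); [rewrite mulr_gt0 ?ltr0n | apply: tri_termZ].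
Qed.

Lemma ulinear_deriv Q : ulinear Q -> (1 < size Q)%N -> ulinear Q^`().
Proof.
move=> [e [sizeQ [le_ea coefQ]]]; rewrite sizeQ ltnS => e_gt0.
exists e.-1; split; first by rewrite (size_deriv_pchar0 _ _ Frac_pchar0) sizeQ prednK.
split=> [|l le_l]; first by rewrite (leq_trans (leq_pred e)).
have [q [q_gt0 Ql]] := coefQ l.+1 ltac:(lia).
exists (l.+1%:R * q); split; first by rewrite mulr_gt0 ?ltr0n.
rewrite coef_deriv_ratr Ql ratrM mulrA; congr (_ * u _); lia.
Qed.

Section Product.
Variables (m d e L : nat) (P Q : {poly Frac a}).
Hypotheses (m_gt0 : (0 < m)%N) (sizeP : size P = d.+1) (le_ad : (a <= d)%N).
Hypothesis leadP : exists2 q, 0 < q & P`_d = ratr q * u a ^+ m.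
Hypothesis coefP : forall l, (d - a <= l < d)%N ->
  exists2 q, 0 < q & tri_term m.-1 (l - (d - a)) q P`_l.
Hypotheses (sizeQ : size Q = e.+1) (le_ea : (e <= a)%N).
Hypothesis coefQ : forall l, (l <= e)%N ->
  exists q, 0 < q /\ Q`_l = ratr q * u (l + (a - e)).
Hypotheses (le_L : (d + e - a <= L)%N) (lt_L : (L < d + e)%N).

Let k := (L - (d + e - a))%N.

Lemma tri_term_coefM_diag : exists2 r, 0 < r & tri_term m k r (P`_(L - e) * Q`_e).
Proof.
have [q q_gt0] := coefP (L - e) ltac:(lia).
rewrite (_ : L - e - (d - a) = k)%N; last by rewrite /k; lia.
move=> [y y_above ->]; have [q' [q'_gt0 ->]] := coefQ e (leqnn e).
exists (q * q'); first exact: mulr_gt0.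
exists (y * (ratr q' * u a)).
  apply: aboveM => //; apply: aboveM; first exact: above_ratr.
  by apply: above_ufrac; rewrite leqnn andbT /k; lia.
rewrite subnKC // ratrM -[in u a ^+ m](prednK m_gt0) exprS; ring.
Qed.

Lemma tri_term_coefM_offdiag i : (i <= L)%N -> i != (L - e)%N ->
  exists2 r, 0 <= r & tri_term m k r (P`_i * Q`_(L - i)).
Proof.
move=> le_iL ne_i.
have [lt_eLi | le_Lie] := ltnP e (L - i).
  by exists 0 => //; rewrite (nth_default _ (_ : size Q <= _)%N) ?sizeQ // mulr0;
     apply: tri_term_above; apply: above0.
have [lt_di | le_id] := ltnP d i.
  by exists 0 => //; rewrite (nth_default _ (_ : size P <= _)%N) ?sizeP // mul0r;
     apply: tri_term_above; apply: above0.
have [q' [q'_gt0 ->]] := coefQ _ le_Lie.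
move: le_id; rewrite leq_eqVlt => /orP[/eqP eq_id | lt_id].
  subst i; have [q q_gt0 ->] := leadP.
  exists (q * q'); first by rewrite ltW ?mulr_gt0.
  exists 0; first exact: above0.
  by rewrite (_ : L - d + (a - e) = k)%N ?ratrM; [ring | rewrite /k; lia].
exists 0 => //; apply: tri_term_above; apply: aboveM.
  have [q _ Pi] := coefP i ltac:(lia).
  by apply: above_tri_term Pi; rewrite /k; lia.
by apply: aboveM; [apply: above_ratr | apply: above_ufrac; rewrite /k; lia].
Qed.

Lemma tri_term_coefM : exists2 r, 0 < r & tri_term m k r ((P * Q)`_L).
Proof.
have lt_LeL : (L - e < L.+1)%N by rewrite ltnS leq_subr.
rewrite coefM (bigD1 (Ordinal lt_LeL)) //= subKn; last lia.
have [r r_gt0 diag] := tri_term_coefM_diag.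
have [s s_ge0 offdiag] : exists2 s, 0 <= s &
    tri_term m k s (\sum_(i < L.+1 | i != Ordinal lt_LeL) P`_i * Q`_(L - i)).
  apply: (big_ind (fun x => exists2 s, 0 <= s & tri_term m k s x)).
  - by exists 0 => //; apply: tri_term_above; apply: above0.
  - by move=> x y [s s_ge0 x_tri] [s' s'_ge0 y_tri]; exists (s + s');
      [apply: addr_ge0 | apply: tri_termD].
  - move=> i; rewrite -val_eqE /= => ne_i.
    by apply: tri_term_coefM_offdiag; rewrite // -ltnS.
by exists (r + s); [apply: ltr_wpDr | apply: tri_termD].
Qed.

End Product.

Lemma triangularM m P Q :
  (0 < m)%N -> triangular a m P -> ulinear Q -> triangular a m.+1 (P * Q).
Proof.
move=> m_gt0 /triangularP[P_R [d [sizeP le_ad leadP coefP]]] lin_Q.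
have [e [sizeQ [le_ea coefQ]]] := lin_Q.
have [P_neq0 Q_neq0] : P != 0 /\ Q != 0 by rewrite -!size_poly_gt0 sizeP sizeQ.
apply/triangularP; split; first by apply: inRY_mul => //; apply: ulinear_inRY.
exists (d + e)%N; split.
- by rewrite size_mul // sizeP sizeQ addnS.
- exact: leq_trans le_ad (leq_addr _ _).
- have [q q_gt0 Pd] := leadP; have [q' [q'_gt0 Qe]] := coefQ e (leqnn e).
  exists (q * q'); first exact: mulr_gt0.
  have := lead_coefM P Q; rewrite !lead_coefE size_mul // sizeP sizeQ addnS /= => ->.
  by rewrite Pd Qe subnKC // ratrM exprS; ring.
- by move=> L /andP[le_L lt_L]; apply: tri_term_coefM.
Qed.

End Coefficients.

Theorem mainTheorem4 (a m : nat) (P Q : {poly Frac a}) :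
  (0 < a)%N -> (1 <= m)%N ->
  triangular a m P -> ulinear Q ->
  (forall q : rat, 0 < q ->
      triangular a m (ratr q *: P) /\ ulinear (ratr q *: Q)) /\
  ((a.+1 <= (size P).-1)%N -> triangular a m P^`()) /\
  ((1 < size Q)%N -> ulinear Q^`()) /\
  triangular a m.+1 (P * Q).
Proof.
move=> _ m_gt0 tri_P lin_Q; split.
  by move=> q q_gt0; split; [apply: triangularZ | apply: ulinearZ].
split; first exact: triangular_deriv.
split; first exact: ulinear_deriv.
exact: triangularM.
Qed.
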